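(* Let $p=p(n)$ satisfy $n^{-\frac{e-2}{3e-2}+\varepsilon}\leq p=o(1)$ for some constant $\varepsilon>0$. For real $k$ define $$\gamma(k)= -\tfrac{1}{2}\ln (2\pi) +k\ln n + k - \tfrac{5}{2} \ln k + (k-1) \ln \frac{p}{1-p} - \binom{k}{2} \ln \frac{1}{1-p},\qquad \binom k2=\frac{k(k-1)}2 .$$ Then, for all sufficiently large $n$, the equation $\gamma(k)=0$ has a unique solution $\hat k=\hat k(n)$ with $1\ll \hat k = o(\sqrt n)$, and $$\hat{k}=2\log_{1/(1-p)}(enp)+ \frac{3\ln p}{2\ln(np)} + 3 + o(1).$$ Moreover, for integers $k$ with $1\ll k\ll\sqrt n$, one has $\mathbb{E}X_k=(1+o(1))e^{\gamma(k)}$.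
   Context: $G(n,p)$ is the binomial random graph on $[n]$ (each pair an edge independently with probability $p$). $X_k$ denotes the number of $k$-element subsets $U\subseteq[n]$ whose induced subgraph in $G(n,p)$ is a tree; thus $\mathbb{E}X_k=\binom nk k^{k-2}p^{k-1}(1-p)^{\binom k2-k+1}$. *)

From Stdlib Require Import Reals Lra Lia Factorial.
From Coquelicot Require Import Coquelicot.
Open Scope R_scope.

Definition binom (n k : nat) : R :=
  if Nat.leb k n then INR (fact n) / (INR (fact k) * INR (fact (n - k))) else 0.

(* E X_k = C(n,k) k^{k-2} p^{k-1} (1-p)^{C(k,2)-k+1}, the expected number of
   k-sets inducing a tree in G(n,p) (formula given in the paper's context).
   The exponent C(k,2)-k+1 = (k-1)(k-2)/2 is a natural number. *)
Definition EX (n : nat) (p : R) (k : nat) : R :=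
  binom n k * INR k ^ (k - 2) * p ^ (k - 1)
  * (1 - p) ^ (Nat.div (k * (k - 1)) 2 + 1 - k).

Definition gamma (n : nat) (p : R) (k : R) : R :=
  - (1/2) * ln (2 * PI) + k * ln (INR n) + k - (5/2) * ln k
  + (k - 1) * ln (p / (1 - p)) - (k * (k - 1) / 2) * ln (1 / (1 - p)).

Definition logb (b x : R) : R := ln x / ln b.

Definition khat_approx (n : nat) (p : R) : R :=
  2 * logb (1 / (1 - p)) (exp 1 * INR n * p)
  + 3 * ln p / (2 * ln (INR n * p)) + 3.

From Stdlib Require Import Reals Lra Lia Factorial Ranalysis5 ClassicalEpsilon.
From Coquelicot Require Import Coquelicot.
Open Scope R_scope.

(* Writing k! via Stirling's formula, E X_k / e^(gamma(k)) is the product of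
   n!/((n-k)! n^k), which lies in [1 - k^2/n, 1], and sqrt(2 PI) k^(k+1/2) e^(-k) / k!,
   which tends to 1; Stirling's constant is identified through Wallis' product.
   Up to constants, gamma(k) = k A - ln k^(5/2) - k (k-1) L / 2 with L = ln(1/(1-p)),
   which is positive for k <= A/L + 1/2 and strictly decreasing beyond, so it has at
   most one root k >= 1. Evaluating gamma at khat_approx -+ δ leaves an error of order
   (ln D)/D with D = k L ~ 2 ln(enp), which is below δ once ln n is large; since
   p >= n^(-1/7) this happens for all large n, and the intermediate value theorem
   gives the root. *)

Lemma le_of_derive_nonneg (f df : R -> R) (a b : R) :
  a <= b ->
  (forall y, a <= y <= b -> is_derive f y (df y)) ->
  (forall y, a <= y <= b -> 0 <= df y) -> f a <= f b.
Proof.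
  intros Hab Hd Hpos.
  destruct (MVT_gen f a b df) as [c [Hc Heq]];
    rewrite ?Rmin_left, ?Rmax_right in * by lra.
  - intros y Hy. apply Hd; lra.
  - intros y Hy. apply continuity_pt_filterlim.
    apply (ex_derive_continuous (V := R_NormedModule)). eexists. apply Hd; lra.
  - assert (0 <= df c) by (apply Hpos; lra). nra.
Qed.

Lemma ln_ratio_ge (x : R) : 0 <= x < 1 -> 2 * x <= ln (1 + x) - ln (1 - x).
Proof.
  intros Hx.
  pose (f y := ln (1 + y) - ln (1 - y) - 2 * y).
  assert (Hf : f 0 <= f x).
  { apply (le_of_derive_nonneg f (fun y => 2 * y ^ 2 / ((1 + y) * (1 - y)))); [lra | |].
    - intros y Hy. unfold f. auto_derive; [repeat split; lra | field; lra].
    - intros y Hy. apply Rmult_le_pos; [nra |].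
      apply Rlt_le, Rinv_0_lt_compat. nra. }
  unfold f in Hf. rewrite Rplus_0_r, Rminus_0_r, ln_1 in Hf. lra.
Qed.

Lemma ln_ratio_le (x : R) : 0 <= x < 1 ->
  ln (1 + x) - ln (1 - x) <= 2 * x + 2 / 3 * x ^ 3 / (1 - x ^ 2).
Proof.
  intros Hx.
  pose (f y := 2 * y + 2 / 3 * y ^ 3 / (1 - y ^ 2) - (ln (1 + y) - ln (1 - y))).
  assert (Hf : f 0 <= f x).
  { apply (le_of_derive_nonneg f (fun y => 4 / 3 * y ^ 4 / (1 - y ^ 2) ^ 2)); [lra | |].
    - intros y Hy. unfold f. auto_derive; [repeat split; nra | field; repeat split; nra].
    - intros y Hy. apply Rmult_le_pos; [nra |].
      apply Rlt_le, Rinv_0_lt_compat, pow_lt. nra. }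
  unfold f in Hf. rewrite Rplus_0_r, Rminus_0_r, ln_1 in Hf.
  replace (2 / 3 * 0 ^ 3 / (1 - 0 ^ 2)) with 0 in Hf by (simpl; field). lra.
Qed.

Lemma ln_le_sub_1 (y : R) : 0 < y -> ln y <= y - 1.
Proof. intros Hy. pose proof (exp_ineq1_le (ln y)). rewrite exp_ln in * by lra. lra. Qed.

Lemma continuity_pt_ln (x : R) : 0 < x -> continuity_pt ln x.
Proof. intros Hx. apply continuity_pt_filterlim, continuous_ln, Hx. Qed.

Lemma continuity_pt_exp (x : R) : continuity_pt exp x.
Proof. apply derivable_continuous_pt, derivable_pt_exp. Qed.

Lemma is_lim_seq_inv_affine_INR (a b : R) : 0 < a -> 0 <= b ->
  is_lim_seq (fun n => 1 / (a * INR (S n) + b)) 0.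
Proof.
  intros Ha Hb.
  apply (is_lim_seq_le_le (fun _ => 0) _ (fun n => / a * / INR (S n))).
  - intros n. pose proof (pos_INR n). rewrite S_INR. split.
    + apply Rlt_le, Rdiv_lt_0_compat; nra.
    + rewrite <- Rinv_mult. unfold Rdiv. rewrite Rmult_1_l.
      apply Rinv_le_contravar; nra.
  - apply is_lim_seq_const.
  - replace (Finite 0) with (Rbar_mult (/ a) (Rbar_inv p_infty)) by (simpl; f_equal; ring).
    apply is_lim_seq_scal_l, is_lim_seq_inv; [| discriminate].
    apply -> is_lim_seq_incr_1. apply is_lim_seq_INR.
Qed.

(** * Stirling's formula via Wallis' product *)

Definition stirling_err (k : nat) : R :=
  ln (INR (fact k)) + INR k - (INR k + 1 / 2) * ln (INR k).

Definition stirling_const : R := 1 / 2 * ln (2 * PI).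

Lemma INR_fact_pos (k : nat) : 0 < INR (fact k).
Proof. apply lt_0_INR, lt_O_fact. Qed.

Lemma stirling_err_1 : stirling_err 1 = 1.
Proof. unfold stirling_err. simpl. rewrite ln_1. ring. Qed.

Lemma stirling_err_sub_succ (k : nat) : (1 <= k)%nat ->
  stirling_err k - stirling_err (S k)
  = (INR k + 1 / 2) * (ln (INR k + 1) - ln (INR k)) - 1.
Proof.
  intros Hk. unfold stirling_err.
  assert (0 < INR k) by (apply lt_0_INR; lia).
  replace (INR (fact (S k))) with (INR (S k) * INR (fact k))
    by (rewrite <- mult_INR; reflexivity).
  rewrite ln_mult by (apply INR_fact_pos || (apply lt_0_INR; lia)).
  rewrite S_INR. ring.
Qed.

(* Substituting x = 1/(2k+1) turns ln((k+1)/k) into ln((1+x)/(1-x)). *)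
Lemma stirling_err_sub_succ_bounds (k : nat) : (1 <= k)%nat ->
  0 <= stirling_err k - stirling_err (S k) <= 1 / (12 * INR k) - 1 / (12 * (INR k + 1)).
Proof.
  intros Hk. rewrite stirling_err_sub_succ by exact Hk.
  assert (Hk0 : 0 < INR k) by (apply lt_0_INR; lia).
  pose (x := 1 / (2 * INR k + 1)).
  assert (Hx : 0 <= x < 1).
  { unfold x. split; [apply Rlt_le, Rdiv_lt_0_compat; lra |].
    apply (Rmult_lt_reg_r (2 * INR k + 1)); [lra |].
    unfold Rdiv. rewrite Rmult_assoc, Rinv_l by lra. lra. }
  assert (Hln : ln (INR k + 1) - ln (INR k) = ln (1 + x) - ln (1 - x)).
  { replace (1 + x) with ((INR k + 1) / (INR k + 1 / 2)) by (unfold x; field; lra).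
    replace (1 - x) with (INR k / (INR k + 1 / 2)) by (unfold x; field; lra).
    rewrite !ln_div by lra. ring. }
  rewrite Hln.
  pose proof (ln_ratio_ge x Hx). pose proof (ln_ratio_le x Hx).
  assert (Hlin : (INR k + 1 / 2) * (2 * x) = 1) by (unfold x; field; lra).
  assert (Hcub : (INR k + 1 / 2) * (2 / 3 * x ^ 3 / (1 - x ^ 2))
                 = 1 / (12 * INR k) - 1 / (12 * (INR k + 1))).
  { unfold x. field. repeat split; try lra. nra. }
  split; nra.
Qed.

Lemma stirling_err_succ_le (n : nat) : stirling_err (S (S n)) <= stirling_err (S n).
Proof. pose proof (stirling_err_sub_succ_bounds (S n) ltac:(lia)). lra. Qed.

Lemma stirling_err_ge (n : nat) : 11 / 12 + 1 / (12 * INR (S n)) <= stirling_err (S n).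
Proof.
  induction n as [| n IH].
  - rewrite stirling_err_1. simpl. lra.
  - pose proof (stirling_err_sub_succ_bounds (S n) ltac:(lia)).
    rewrite (S_INR (S n)). lra.
Qed.

Lemma ex_finite_lim_stirling_err : ex_finite_lim_seq (fun n => stirling_err (S n)).
Proof.
  apply (ex_finite_lim_seq_decr _ (11 / 12)); [apply stirling_err_succ_le |].
  intros n. pose proof (stirling_err_ge n).
  assert (0 < 1 / (12 * INR (S n))).
  { apply Rdiv_lt_0_compat; [lra |]. apply Rmult_lt_0_compat; [lra |]. apply lt_0_INR; lia. }
  lra.
Qed.

Definition wallis (n : nat) : R := RInt (fun x => sin x ^ n) 0 (PI / 2).

Lemma continuous_sin_pow (n : nat) (x : R) : continuous (fun y => sin y ^ n) x.
Proof. apply (ex_derive_continuous (V := R_NormedModule)). auto_derive. auto. Qed.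

Lemma ex_RInt_sin_pow (n : nat) (a b : R) : ex_RInt (fun x => sin x ^ n) a b.
Proof.
  apply (ex_RInt_continuous (V := R_CompleteNormedModule)).
  intros. apply continuous_sin_pow.
Qed.

Lemma RInt_scal_sin_pow (c : R) (n : nat) :
  RInt (fun x => c * sin x ^ n) 0 (PI / 2) = c * wallis n.
Proof.
  exact (RInt_scal (V := R_CompleteNormedModule) _ 0 (PI / 2) c (ex_RInt_sin_pow n _ _)).
Qed.

(* Integration by parts, via the antiderivative cos x * sin x ^ (n+1). *)
Lemma wallis_rec (n : nat) : (INR n + 2) * wallis (n + 2) = (INR n + 1) * wallis n.
Proof.
  pose (F x := cos x * sin x ^ (n + 1)).
  pose (g x := (INR n + 1) * sin x ^ n - (INR n + 2) * sin x ^ (n + 2)).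
  assert (Hg : is_RInt g 0 (PI / 2) (minus (F (PI / 2)) (F 0))).
  { apply (is_RInt_derive (V := R_CompleteNormedModule)).
    - intros x _. unfold F, g. auto_derive; [auto |].
      replace (Init.Nat.pred (n + 1)) with n by lia.
      rewrite !pow_add, plus_INR. simpl INR.
      pose proof (sin2_cos2 x) as Hsc. unfold Rsqr in Hsc.
      replace (cos x * (1 * cos x * ((INR n + 1) * sin x ^ n)))
        with ((cos x * cos x) * ((INR n + 1) * sin x ^ n)) by ring.
      replace (cos x * cos x) with (1 - sin x * sin x) by lra. ring.
    - intros x _. unfold g. apply (ex_derive_continuous (V := R_NormedModule)).
      auto_derive. auto. }
  apply (is_RInt_unique (V := R_CompleteNormedModule)) in Hg.
  replace (minus (F (PI / 2)) (F 0)) with 0 in Hg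
    by (unfold F, minus, plus, opp; simpl; rewrite cos_PI2, sin_0, pow_i by lia; ring).
  assert (Hsplit : RInt g 0 (PI / 2) = (INR n + 1) * wallis n - (INR n + 2) * wallis (n + 2)).
  { rewrite <- !RInt_scal_sin_pow.
    apply (RInt_minus (V := R_CompleteNormedModule));
      apply (ex_RInt_continuous (V := R_CompleteNormedModule)); intros;
      apply (ex_derive_continuous (V := R_NormedModule)); auto_derive; auto. }
  lra.
Qed.

Lemma wallis_0 : wallis 0 = PI / 2.
Proof.
  unfold wallis. simpl pow. rewrite (RInt_const (V := R_CompleteNormedModule)).
  unfold scal; simpl; unfold mult; simpl. ring.
Qed.

Lemma wallis_1 : wallis 1 = 1.
Proof.
  unfold wallis.
  rewrite (RInt_ext (V := R_CompleteNormedModule) _ sin) by (intros; simpl; ring).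
  apply (is_RInt_unique (V := R_CompleteNormedModule)).
  replace 1 with (minus (- cos (PI / 2)) (- cos 0))
    by (rewrite cos_PI2, cos_0; unfold minus, plus, opp; simpl; ring).
  apply (is_RInt_derive (V := R_CompleteNormedModule) (fun x => - cos x)).
  - intros x _. auto_derive; auto. ring.
  - intros x _. apply (ex_derive_continuous (V := R_NormedModule)). auto_derive. auto.
Qed.

Lemma wallis_succ_le (n : nat) : wallis (S n) <= wallis n.
Proof.
  pose proof PI_RGT_0.
  apply RInt_le; [lra | apply ex_RInt_sin_pow | apply ex_RInt_sin_pow |].
  intros x Hx.
  assert (0 <= sin x) by (apply sin_ge_0; lra).
  pose proof (SIN_bound x).
  assert (0 <= sin x ^ n) by (apply pow_le; lra).
  simpl. nra.
Qed.

Definition central_binom_scaled (m : nat) : R :=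
  INR (fact (2 * m)) / (4 ^ m * INR (fact m) ^ 2).

Lemma central_binom_scaled_pos (m : nat) : 0 < central_binom_scaled m.
Proof.
  apply Rdiv_lt_0_compat; [apply INR_fact_pos |].
  apply Rmult_lt_0_compat; apply pow_lt; [lra | apply INR_fact_pos].
Qed.

Lemma central_binom_scaled_succ (m : nat) :
  central_binom_scaled (S m) = central_binom_scaled m * (2 * INR m + 1) / (2 * INR m + 2).
Proof.
  unfold central_binom_scaled.
  replace (2 * S m)%nat with (S (S (2 * m))) by lia.
  change (fact (S (S (2 * m)))) with (S (S (2 * m)) * (S (2 * m) * fact (2 * m)))%nat.
  change (fact (S m)) with (S m * fact m)%nat.
  rewrite !mult_INR, !S_INR, mult_INR. simpl INR.
  pose proof (INR_fact_pos m). pose proof (pos_INR m).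
  simpl pow. field. repeat split; try lra. apply pow_nonzero. lra.
Qed.

Lemma wallis_even (m : nat) : wallis (2 * m) = PI / 2 * central_binom_scaled m.
Proof.
  induction m as [| m IH].
  - simpl. rewrite wallis_0. unfold central_binom_scaled. simpl. field.
  - pose proof (wallis_rec (2 * m)) as Hrec.
    replace (2 * S m)%nat with (2 * m + 2)%nat by lia.
    rewrite mult_INR in Hrec. change (INR 2) with 2 in Hrec.
    rewrite central_binom_scaled_succ. pose proof (pos_INR m).
    apply (Rmult_eq_reg_l (2 * INR m + 2)); [| lra].
    rewrite Hrec, IH. field. lra.
Qed.

Lemma wallis_odd (m : nat) :
  wallis (2 * m + 1) * ((2 * INR m + 1) * central_binom_scaled m) = 1.
Proof.
  induction m as [| m IH].
  - simpl. rewrite wallis_1. unfold central_binom_scaled. simpl. field.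
  - pose proof (wallis_rec (2 * m + 1)) as Hrec.
    replace (2 * S m + 1)%nat with (2 * m + 1 + 2)%nat by lia.
    rewrite plus_INR, mult_INR in Hrec. change (INR 2) with 2 in Hrec.
    change (INR 1) with 1 in Hrec.
    rewrite central_binom_scaled_succ, S_INR. pose proof (pos_INR m).
    replace (wallis (2 * m + 1 + 2)) with ((2 * INR m + 2) * wallis (2 * m + 1) / (2 * INR m + 3))
      by (apply (Rmult_eq_reg_l (2 * INR m + 1 + 2)); [rewrite Hrec; field |]; lra).
    transitivity (wallis (2 * m + 1) * ((2 * INR m + 1) * central_binom_scaled m));
      [field; lra | exact IH].
Qed.

(* Wallis' product, squeezed between wallis (2m+2) <= wallis (2m+1) <= wallis (2m). *)
Lemma wallis_product_bounds (m : nat) :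
  2 / PI <= (2 * INR m + 1) * central_binom_scaled m ^ 2
  <= 2 / PI * (1 + 1 / (2 * INR m + 1)).
Proof.
  pose proof (central_binom_scaled_pos m) as Hc. pose proof (pos_INR m). pose proof PI_RGT_0.
  pose proof (wallis_succ_le (2 * m)) as Hle1. pose proof (wallis_succ_le (2 * m + 1)) as Hle2.
  replace (S (2 * m)) with (2 * m + 1)%nat in Hle1 by lia.
  replace (S (2 * m + 1)) with (2 * S m)%nat in Hle2 by lia.
  rewrite wallis_even in Hle1. rewrite wallis_even, central_binom_scaled_succ in Hle2.
  assert (Hodd : wallis (2 * m + 1) = / ((2 * INR m + 1) * central_binom_scaled m)).
  { pose proof (wallis_odd m). field_simplify_eq; [lra |]. split; lra. }
  rewrite Hodd in Hle1, Hle2.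
  set (c := central_binom_scaled m) in *. set (a := 2 * INR m + 1) in *.
  assert (Ha : 0 < a) by (unfold a; lra).
  assert (Hac : 0 < a * c) by nra.
  split.
  - replace (a * c ^ 2) with ((a * c) * c) by ring.
    apply (Rmult_le_reg_r (PI / 2)); [lra |].
    replace (2 / PI * (PI / 2)) with 1 by (field; lra).
    apply (Rmult_le_reg_r (/ (a * c))); [apply Rinv_0_lt_compat; lra |].
    replace (a * c * c * (PI / 2) * / (a * c)) with (PI / 2 * c) by (field; lra).
    rewrite Rmult_1_l. exact Hle1.
  - replace (2 * INR m + 2) with (a + 1) in Hle2 by (unfold a; ring).
    apply (Rmult_le_reg_r (PI / 2 * (a / (a + 1)) / (a * c))).
    { apply Rdiv_lt_0_compat; [| lra]. apply Rmult_lt_0_compat; [lra |].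
      apply Rdiv_lt_0_compat; lra. }
    replace (a * c ^ 2 * (PI / 2 * (a / (a + 1)) / (a * c)))
      with (PI / 2 * (c * a / (a + 1))) by (field; repeat split; lra).
    replace (2 / PI * (1 + 1 / a) * (PI / 2 * (a / (a + 1)) / (a * c)))
      with (/ (a * c)) by (field; repeat split; lra).
    exact Hle2.
Qed.

Lemma ln_wallis_product (m : nat) : (1 <= m)%nat ->
  ln ((2 * INR m + 1) * central_binom_scaled m ^ 2)
  = ln (2 + 1 / INR m) + ln 2 + 2 * stirling_err (2 * m) - 4 * stirling_err m.
Proof.
  intros Hm.
  assert (0 < INR m) by (apply lt_0_INR; lia).
  pose proof (central_binom_scaled_pos m). pose proof (INR_fact_pos m).
  pose proof (INR_fact_pos (2 * m)).
  rewrite ln_mult, ln_pow by (try lra; apply pow_lt; lra).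
  unfold central_binom_scaled, stirling_err.
  rewrite ln_div by (try lra; apply Rmult_lt_0_compat; apply pow_lt; lra).
  rewrite ln_mult by (apply pow_lt; lra).
  rewrite !ln_pow by lra.
  rewrite mult_INR. change (INR 2) with 2. rewrite ln_mult by lra.
  replace (2 + 1 / INR m) with ((2 * INR m + 1) / INR m) by (field; lra).
  rewrite ln_div by lra.
  replace 4 with (2 * 2) at 1 by ring. rewrite ln_mult by lra.
  field.
Qed.

Lemma is_lim_seq_stirling_err : is_lim_seq stirling_err stirling_const.
Proof.
  apply is_lim_seq_incr_1.
  destruct ex_finite_lim_stirling_err as [l Hl].
  assert (Hprod : is_lim_seq (fun n => ln ((2 * INR (S n) + 1) * central_binom_scaled (S n) ^ 2))
                    (ln (2 / PI))).
  { apply is_lim_seq_continuous; [apply continuity_pt_ln, Rdiv_lt_0_compat; pose proof PI_RGT_0; lra |].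
    apply (is_lim_seq_le_le (fun _ => 2 / PI) _ (fun n => 2 / PI * (1 + 1 / (2 * INR (S n) + 1))));
      [intros n; apply wallis_product_bounds | apply is_lim_seq_const |].
    replace (Finite (2 / PI)) with (Finite (2 / PI * (1 + 0))) by (f_equal; ring).
    apply is_lim_seq_mult', is_lim_seq_plus';
      [apply is_lim_seq_const | apply is_lim_seq_const | apply is_lim_seq_inv_affine_INR; lra]. }
  assert (Hrhs : is_lim_seq (fun n => ln (2 + 1 / INR (S n)) + ln 2
                   + 2 * stirling_err (2 * S n) - 4 * stirling_err (S n))
                   (ln 2 + ln 2 + 2 * l - 4 * l)).
  { apply is_lim_seq_minus'; [apply is_lim_seq_plus'; [apply is_lim_seq_plus' |] |].
    - apply (is_lim_seq_continuous ln (fun n => 2 + 1 / INR (S n)) 2); [apply continuity_pt_ln; lra |].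
      replace (Finite 2) with (Finite (2 + 0)) by (f_equal; ring).
      apply is_lim_seq_plus'; [apply is_lim_seq_const |].
      apply (is_lim_seq_ext (fun n => 1 / (1 * INR (S n) + 0))); [intros; f_equal; ring |].
      apply is_lim_seq_inv_affine_INR; lra.
    - apply is_lim_seq_const.
    - apply is_lim_seq_mult'; [apply is_lim_seq_const |].
      apply (is_lim_seq_ext (fun n => stirling_err (S (2 * n + 1)))); [intros; f_equal; lia |].
      apply (is_lim_seq_subseq (fun n => stirling_err (S n)) _ (fun n => 2 * n + 1)%nat); [| exact Hl].
      apply eventually_subseq. intros; lia.
    - apply is_lim_seq_mult'; [apply is_lim_seq_const | exact Hl]. }
  assert (Hl_eq : ln (2 / PI) = ln 2 + ln 2 + 2 * l - 4 * l).
  { apply is_lim_seq_unique in Hprod, Hrhs.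
    assert (E : Finite (ln (2 / PI)) = Finite (ln 2 + ln 2 + 2 * l - 4 * l)).
    { rewrite <- Hprod, <- Hrhs. apply Lim_seq_ext. intros n. apply ln_wallis_product. lia. }
    now injection E. }
  replace stirling_const with l; [exact Hl |].
  unfold stirling_const. pose proof PI_RGT_0.
  rewrite ln_div in Hl_eq by lra. rewrite ln_mult by lra. lra.
Qed.

(** * The expected number of induced trees *)

Definition falling_ratio (N k : nat) : R := INR (fact N) / (INR (fact (N - k)) * INR N ^ k).

Lemma falling_ratio_0 (N : nat) : falling_ratio N 0 = 1.
Proof.
  unfold falling_ratio. rewrite Nat.sub_0_r. simpl.
  pose proof (INR_fact_pos N). field. lra.
Qed.

Lemma falling_ratio_succ (N k : nat) : (S k <= N)%nat ->
  falling_ratio N (S k) = falling_ratio N k * (1 - INR k / INR N).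
Proof.
  intros Hk. unfold falling_ratio.
  assert (HN : 0 < INR N) by (apply lt_0_INR; lia).
  replace (N - k)%nat with (S (N - S k)) by lia.
  change (fact (S (N - S k))) with (S (N - S k) * fact (N - S k))%nat.
  rewrite mult_INR, S_INR, minus_INR by lia. rewrite S_INR.
  pose proof (INR_fact_pos (N - S k)).
  assert (INR k + 1 <= INR N) by (rewrite <- S_INR; apply le_INR; lia).
  simpl pow. field. repeat split; try lra. apply pow_nonzero. lra.
Qed.

Lemma falling_ratio_bounds (N k : nat) : (k <= N)%nat ->
  1 - INR k ^ 2 / INR N <= falling_ratio N k <= 1.
Proof.
  induction k as [| k IH]; intros Hk.
  - rewrite falling_ratio_0. simpl. unfold Rdiv. lra.
  - specialize (IH ltac:(lia)).
    assert (HN : 0 < INR N) by (apply lt_0_INR; lia).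
    assert (Hq : 0 <= INR k / INR N <= 1).
    { pose proof (pos_INR k). assert (INR k <= INR N) by (apply le_INR; lia).
      split; [apply Rdiv_le_0_compat; lra |].
      apply (Rmult_le_reg_r (INR N)); [lra |]. field_simplify; lra. }
    assert (Hsq : INR (S k) ^ 2 / INR N = INR k ^ 2 / INR N + INR k / INR N + INR (S k) / INR N)
      by (rewrite S_INR; field; lra).
    assert (0 <= INR (S k) / INR N) by (apply Rdiv_le_0_compat; [apply pos_INR | lra]).
    rewrite falling_ratio_succ by exact Hk. split; nra.
Qed.

Lemma INR_binom2 (k : nat) : INR (Nat.div (k * (k - 1)) 2) = INR k * (INR k - 1) / 2.
Proof.
  assert (Hdiv : (Nat.div (k * (k - 1)) 2 * 2 = k * (k - 1))%nat).
  { destruct (Nat.Even_or_Odd k) as [[j ->] | [j ->]].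
    - replace (2 * j * (2 * j - 1))%nat with (j * (2 * j - 1) * 2)%nat by ring.
      now rewrite Nat.div_mul.
    - replace ((2 * j + 1) * (2 * j + 1 - 1))%nat with ((2 * j + 1) * j * 2)%nat by lia.
      now rewrite Nat.div_mul. }
  destruct k as [| k]; [simpl; field |].
  apply (f_equal INR) in Hdiv. rewrite !mult_INR, minus_INR in Hdiv by lia.
  change (INR 2) with 2 in Hdiv. change (INR 1) with 1 in Hdiv. lra.
Qed.

(* The powers of k, p and 1-p cancel exactly against gamma; what remains is
   n!/((n-k)! n^k) and Stirling's ratio sqrt(2 PI) k^(k+1/2) e^(-k) / k!. *)
Lemma EX_div_exp_gamma (n : nat) (p : R) (k : nat) :
  (2 <= k)%nat -> (k <= n)%nat -> 0 < p < 1 ->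
  EX n p k / exp (gamma n p (INR k)) = falling_ratio n k * exp (stirling_const - stirling_err k).
Proof.
  intros Hk Hkn Hp.
  assert (Hk2 : 2 <= INR k) by (change 2 with (INR 2); apply le_INR; lia).
  assert (Hkn' : INR k <= INR n) by (apply le_INR; lia).
  pose (m := Nat.div (k * (k - 1)) 2).
  assert (Hm : INR m = INR k * (INR k - 1) / 2) by apply INR_binom2.
  assert (Hmk : (k <= m + 1)%nat) by (apply INR_le; rewrite plus_INR, Hm; simpl INR; nra).
  pose proof (INR_fact_pos n). pose proof (INR_fact_pos k). pose proof (INR_fact_pos (n - k)).
  assert (HEX : EX n p k = exp (ln (INR (fact n)) - ln (INR (fact k)) - ln (INR (fact (n - k)))
       + (INR k - 2) * ln (INR k) + (INR k - 1) * ln p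
       + (INR k * (INR k - 1) / 2 + 1 - INR k) * ln (1 - p))).
  { unfold EX, binom. rewrite (proj2 (Nat.leb_le k n) Hkn).
    unfold Rminus. rewrite !exp_plus, !exp_Ropp, !exp_ln by lra.
    replace (INR k + - (2)) with (INR (k - 2)) by (rewrite minus_INR by lia; simpl; ring).
    replace (INR k * (INR k + - (1)) / 2 + 1 + - INR k) with (INR (m + 1 - k))
      by (rewrite minus_INR, plus_INR, Hm by lia; simpl; field).
    replace (INR k + - (1)) with (INR (k - 1)) by (rewrite minus_INR by lia; simpl; ring).
    rewrite <- !ln_pow, !exp_ln by (try apply pow_lt; lra).
    fold m. field. lra. }
  assert (Hfall : falling_ratio n k
                  = exp (ln (INR (fact n)) - ln (INR (fact (n - k))) - INR k * ln (INR n))).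
  { unfold falling_ratio, Rminus. rewrite !exp_plus, !exp_Ropp, !exp_ln by lra.
    rewrite <- ln_pow, exp_ln by (try apply pow_lt; lra). field.
    split; [apply pow_nonzero |]; lra. }
  rewrite HEX, Hfall, <- exp_plus. unfold Rdiv. rewrite <- exp_Ropp, <- exp_plus.
  f_equal. unfold gamma, stirling_const, stirling_err.
  rewrite ln_div by lra. replace (1 / (1 - p)) with (/ (1 - p)) by (field; lra).
  rewrite ln_Rinv by lra. field.
Qed.

Lemma eventually_and (P Q : nat -> Prop) :
  eventually P -> eventually Q -> eventually (fun n => P n /\ Q n).
Proof. intros [N1 H1] [N2 H2]. exists (max N1 N2). intros n Hn. split; [apply H1 | apply H2]; lia. Qed.

Lemma eventually_k_range (k : nat -> nat) :
  is_lim_seq (fun n => INR (k n)) p_infty ->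
  is_lim_seq (fun n => INR (k n) / sqrt (INR n)) 0 ->
  eventually (fun n => (2 <= k n)%nat /\ (k n <= n)%nat).
Proof.
  intros Hinf Hsqrt.
  apply is_lim_seq_spec in Hinf, Hsqrt.
  destruct (eventually_and _ _ (Hinf 2) (Hsqrt (mkposreal 1 Rlt_0_1))) as [N HN].
  exists (max N 1). intros n Hn. destruct (HN n ltac:(lia)) as [H2 H1]. simpl in H1.
  assert (Hn1 : 1 <= INR n) by (change 1 with (INR 1); apply le_INR; lia).
  assert (Hs : 0 < sqrt (INR n)) by (apply sqrt_lt_R0; lra).
  rewrite Rminus_0_r, Rabs_pos_eq in H1 by (apply Rdiv_le_0_compat; [apply pos_INR | lra]).
  assert (Hk : INR (k n) < sqrt (INR n)).
  { apply (Rmult_lt_reg_r (/ sqrt (INR n))); [apply Rinv_0_lt_compat; lra |].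
    rewrite Rinv_r by lra. exact H1. }
  assert (sqrt (INR n) <= INR n).
  { rewrite <- (sqrt_square (INR n)) at 2 by lra. apply sqrt_le_1_alt. nra. }
  split; apply INR_le; simpl INR; lra.
Qed.

Lemma is_lim_seq_falling_ratio (k : nat -> nat) :
  eventually (fun n => (k n <= n)%nat) ->
  is_lim_seq (fun n => INR (k n) / sqrt (INR n)) 0 ->
  is_lim_seq (fun n => falling_ratio n (k n)) 1.
Proof.
  intros [N HN] Hsqrt.
  apply (is_lim_seq_le_le_loc (fun n => 1 - (INR (k n) / sqrt (INR n)) ^ 2) _ (fun _ => 1));
    [| | apply is_lim_seq_const].
  - exists (max N 1). intros n Hn.
    assert (0 < INR n) by (apply lt_0_INR; lia).
    replace ((INR (k n) / sqrt (INR n)) ^ 2) with (INR (k n) ^ 2 / INR n).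
    + apply falling_ratio_bounds, HN. lia.
    + rewrite <- (sqrt_sqrt (INR n)) at 1 by lra. field. apply Rgt_not_eq, sqrt_lt_R0; lra.
  - replace (Finite 1) with (Finite (1 - 0 ^ 2)) by (f_equal; simpl; ring).
    apply is_lim_seq_minus'; [apply is_lim_seq_const |].
    simpl. apply is_lim_seq_mult'; [exact Hsqrt |].
    apply is_lim_seq_mult'; [exact Hsqrt | apply is_lim_seq_const].
Qed.

Lemma is_lim_seq_stirling_err_comp (k : nat -> nat) :
  is_lim_seq (fun n => INR (k n)) p_infty ->
  is_lim_seq (fun n => stirling_err (k n)) stirling_const.
Proof.
  intros Hinf. apply (is_lim_seq_subseq stirling_err _ k); [| apply is_lim_seq_stirling_err].
  intros P [N HN]. apply is_lim_seq_spec in Hinf. destruct (Hinf (INR N)) as [M HM].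
  exists M. intros n Hn. apply HN. apply Nat.lt_le_incl, INR_lt, HM, Hn.
Qed.

Lemma is_lim_seq_EX_div_exp_gamma (p : nat -> R) (k : nat -> nat) :
  eventually (fun n => 0 < p n < 1) ->
  is_lim_seq (fun n => INR (k n)) p_infty ->
  is_lim_seq (fun n => INR (k n) / sqrt (INR n)) 0 ->
  is_lim_seq (fun n => EX n (p n) (k n) / exp (gamma n (p n) (INR (k n)))) 1.
Proof.
  intros Hp Hinf Hsqrt.
  pose proof (eventually_k_range k Hinf Hsqrt) as Hk.
  apply (is_lim_seq_ext_loc (fun n => falling_ratio n (k n) * exp (stirling_const - stirling_err (k n)))).
  { destruct (eventually_and _ _ Hk Hp) as [N HN]. exists N. intros n Hn.
    destruct (HN n Hn) as [[H2 Hkn] Hpn]. symmetry. apply EX_div_exp_gamma; auto. }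
  replace (Finite 1) with (Finite (1 * exp (stirling_const - stirling_const)))
    by (rewrite Rminus_diag, exp_0; f_equal; ring).
  apply is_lim_seq_mult'.
  - apply is_lim_seq_falling_ratio; [| exact Hsqrt].
    destruct Hk as [N HN]. exists N. intros n Hn. apply HN, Hn.
  - apply (is_lim_seq_continuous exp); [apply continuity_pt_exp |].
    apply is_lim_seq_minus'; [apply is_lim_seq_const |].
    apply is_lim_seq_stirling_err_comp, Hinf.
Qed.

(** * The root of gamma *)

Lemma stirling_const_bounds : 0 <= stirling_const <= 3 / 2.
Proof.
  unfold stirling_const. pose proof PI_4. pose proof PI_RGT_0. pose proof PI2_1.
  split.
  - assert (0 <= ln (2 * PI)) by (rewrite <- ln_1; apply ln_le; lra). lra.
  - assert (Hle : ln (2 * PI) <= ln (exp 3)).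
    { apply ln_le; [lra |].
      replace 3 with (1 + 1 + 1) by ring. rewrite !exp_plus.
      pose proof (exp_ineq1_le 1). nra. }
    rewrite ln_exp in Hle. lra.
Qed.

Lemma ln_inv_one_sub_bounds (p : R) : 0 < p <= 1 / 2 -> p <= ln (1 / (1 - p)) <= 2 * p.
Proof.
  intros Hp. replace (1 / (1 - p)) with (/ (1 - p)) by (field; lra).
  rewrite ln_Rinv by lra.
  assert (/ (1 - p) <= 1 + 2 * p).
  { apply (Rmult_le_reg_r (1 - p)); [lra |]. rewrite Rinv_l by lra. nra. }
  pose proof (ln_le_sub_1 (1 - p) ltac:(lra)).
  pose proof (ln_le_sub_1 (/ (1 - p)) ltac:(apply Rinv_0_lt_compat; lra)).
  rewrite ln_Rinv in * by lra.
  lra.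
Qed.

(* gamma with its coefficients abstracted: A = ln(e n p) + L, q = -ln p - L, L = ln(1/(1-p)). *)
Definition gamma_model (c A q L k : R) : R :=
  - c + q + k * A - 5 / 2 * ln k - k * (k - 1) / 2 * L.

Lemma gamma_eq_model (n : nat) (p k : R) : 0 < p < 1 ->
  gamma n p k = gamma_model stirling_const (ln (INR n) + 1 + ln p + ln (1 / (1 - p)))
                  (- ln p - ln (1 / (1 - p))) (ln (1 / (1 - p))) k.
Proof.
  intros Hp. unfold gamma, gamma_model, stirling_const.
  replace (p / (1 - p)) with (p * (1 / (1 - p))) by (field; lra).
  assert (0 < 1 / (1 - p)) by (apply Rdiv_lt_0_compat; lra).
  rewrite (ln_mult p) by lra. field.
Qed.

Section GammaModelShape.

Variables c A q L : R.
Hypotheses (Hc : 0 <= c <= 3 / 2) (HA : 10 <= A) (Hq : 0 <= q) (HL : 0 < L).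

Lemma gamma_model_pos (k : R) : 1 <= k <= A / L + 1 / 2 -> 0 < gamma_model c A q L k.
Proof.
  intros Hk. unfold gamma_model.
  pose proof (ln_le_sub_1 k ltac:(lra)).
  assert (HkL : (k - 1) * L <= A).
  { assert (A / L * L = A) by (field; lra). nra. }
  assert (k * (k - 1) / 2 * L <= k * A / 2).
  { replace (k * (k - 1) / 2 * L) with (k * ((k - 1) * L) / 2) by field. nra. }
  nra.
Qed.

Lemma gamma_model_lt (k1 k2 : R) : A / L + 1 / 2 <= k1 -> k1 < k2 ->
  gamma_model c A q L k2 < gamma_model c A q L k1.
Proof.
  intros Hk1 H12. unfold gamma_model.
  assert (A + L / 2 <= k1 * L) by (assert (A / L * L = A) by (field; lra); nra).
  assert (0 < A / L) by (apply Rdiv_lt_0_compat; lra).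
  pose proof (ln_increasing k1 k2 ltac:(lra) H12).
  assert (Hneg : A - L * (k1 + k2 - 1) / 2 < 0) by nra.
  assert (Hdiff : k2 * A - k2 * (k2 - 1) / 2 * L - (k1 * A - k1 * (k1 - 1) / 2 * L)
                  = (k2 - k1) * (A - L * (k1 + k2 - 1) / 2)) by field.
  assert ((k2 - k1) * (A - L * (k1 + k2 - 1) / 2) < 0)
    by (apply Rmult_pos_neg; lra).
  lra.
Qed.

Lemma gamma_model_root_unique (k1 k2 : R) : 1 <= k1 -> 1 <= k2 ->
  gamma_model c A q L k1 = 0 -> gamma_model c A q L k2 = 0 -> k1 = k2.
Proof.
  intros H1 H2 E1 E2.
  assert (Hbig : forall k, 1 <= k -> gamma_model c A q L k = 0 -> A / L + 1 / 2 < k).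
  { intros k Hk Ek. destruct (Rle_lt_dec k (A / L + 1 / 2)) as [Hle | Hlt]; [| exact Hlt].
    pose proof (gamma_model_pos k ltac:(lra)). lra. }
  pose proof (Hbig k1 H1 E1). pose proof (Hbig k2 H2 E2).
  destruct (Rtotal_order k1 k2) as [Hlt | [Heq | Hgt]]; [| exact Heq |].
  - pose proof (gamma_model_lt k1 k2 ltac:(lra) Hlt). lra.
  - pose proof (gamma_model_lt k2 k1 ltac:(lra) Hgt). lra.
Qed.

End GammaModelShape.

Lemma abs_lt_of_mul_sqrt_le (x D δ : R) : 0 < δ <= 1 -> 1000 / δ ^ 2 <= D ->
  Rabs x * D <= 10 * sqrt D + 12 -> Rabs x < δ.
Proof.
  intros Hδ HD Hx.
  assert (Hδ2 : 0 < δ ^ 2) by (apply pow_lt; lra).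
  assert (HDδ : 1000 <= D * δ ^ 2) by (assert (1000 / δ ^ 2 * δ ^ 2 = 1000) by (field; lra); nra).
  assert (HD1 : 1000 <= D) by (assert (δ ^ 2 <= 1) by (simpl; nra); nra).
  pose (r := sqrt D).
  assert (Hr2 : r * r = D) by (apply sqrt_sqrt; lra).
  assert (Hr0 : 0 < r) by (apply sqrt_lt_R0; lra).
  assert (Hr12 : 12 <= r)
    by (destruct (Rle_lt_dec 12 r) as [| Hlt]; [lra | assert (r * r < 12 * 12) by nra; lra]).
  assert (Hrδ : 11 < r * δ).
  { replace (D * δ ^ 2) with ((r * δ) * (r * δ)) in HDδ by (rewrite <- Hr2; ring).
    destruct (Rle_lt_dec (r * δ) 11) as [Hle | Hlt]; [| exact Hlt].
    assert ((r * δ) * (r * δ) <= 11 * 11) by (apply Rmult_le_compat; nra). lra. }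
  pose proof (Rabs_pos x).
  assert (Rabs x * r <= 11) by (fold r in Hx; nra).
  nra.
Qed.

Section ShiftedRoot.

Variables c B L lp δ : R.
Hypotheses (Hc : 0 <= c <= 3 / 2) (HL : 0 < L <= 1) (HlpL : 0 <= ln L - lp <= 1)
  (HB : 0 < B - 1) (Hlp : 0 <= - lp <= (B - 1) / 6)
  (Hδ : 0 < δ <= 1) (HBδ : 1000 / δ ^ 2 <= 2 * (B - 1)).

Definition root_correction : R := 3 * lp / (2 * (B - 1)).

(* With B = ln(e n p) and lp = ln p, this is khat_approx. *)
Definition root_guess : R := 2 * B / L + root_correction + 3.

Lemma root_correction_bounds : - 1 / 4 <= root_correction <= 0.
Proof.
  clear - HB Hlp.
  assert (root_correction * (2 * (B - 1)) = 3 * lp) by (unfold root_correction; field; lra).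
  nra.
Qed.

Lemma root_guess_ge : 2 * B + 1 <= root_guess.
Proof.
  clear - HL HB Hlp.
  pose proof root_correction_bounds.
  assert (2 * B <= 2 * B / L).
  { unfold Rdiv. rewrite <- (Rmult_1_r (2 * B)) at 1.
    apply Rmult_le_compat_l; [lra |]. rewrite <- Rinv_1. apply Rinv_le_contravar; lra. }
  unfold root_guess. lra.
Qed.

Lemma root_guess_le : root_guess <= 2 * B / L + 3.
Proof. clear - HB Hlp. pose proof root_correction_bounds. unfold root_guess. lra. Qed.

Definition shift_error (k : R) : R :=
  root_correction + (5 * ln k + 2 * c + 2 * lp + 2 * L) / (k * L).

Lemma gamma_model_shift_eq (k t : R) : k = root_guess + t -> 0 < k ->
  gamma_model c (B + L) (- lp - L) L k = k * L / 2 * (- t - shift_error k).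
Proof.
  intros Hk Hk0. unfold root_guess in Hk.
  assert (HBk : B = (k * L - (root_correction + 3 + t) * L) / 2) by (rewrite Hk; field; lra).
  unfold gamma_model, shift_error. rewrite HBk. field. lra.
Qed.

Lemma ln_le_twice_sqrt (x : R) : 0 < x -> ln x <= 2 * sqrt x.
Proof.
  intros Hx. rewrite <- (sqrt_sqrt x) at 1 by lra.
  pose proof (sqrt_lt_R0 x Hx).
  rewrite ln_mult by lra. pose proof (ln_le_sub_1 (sqrt x) ltac:(lra)). lra.
Qed.

(* Multiplied by D = k L, the error is O(ln D) = O(sqrt D), while D >= 1000 / δ^2. *)
Lemma shift_error_lt (t : R) : - 1 <= t <= 1 -> Rabs (shift_error (root_guess + t)) < δ.
Proof.
  intros Ht. pose proof root_correction_bounds. pose proof root_guess_ge.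
  set (k := root_guess + t).
  assert (Hk : 1 <= k) by (unfold k; lra).
  set (D := k * L).
  assert (HDB : D - 2 * (B - 1) = (root_correction + 3 + t) * L + 2)
    by (unfold D, k, root_guess; field; lra).
  assert (HDk : D = k * L) by reflexivity.
  clearbody D k.
  assert (0 <= (root_correction + 3 + t) * L) by (apply Rmult_le_pos; lra).
  assert (HD : 2 * (B - 1) <= D) by lra.
  assert (Hlnk : ln k = ln D - ln L) by (rewrite HDk, ln_mult by lra; ring).
  assert (HDE : D * shift_error k
                = root_correction * (D - 2 * (B - 1)) + 5 * ln D - 5 * (ln L - lp) + 2 * c + 2 * L).
  { unfold shift_error. rewrite <- HDk, Hlnk. unfold root_correction. field. split; lra. }
  assert (HlnD : 0 <= ln D <= 2 * sqrt D).
  { split; [rewrite <- ln_1; apply ln_le; lra | apply ln_le_twice_sqrt; lra]. }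
  assert (Hcorr : Rabs (root_correction * (D - 2 * (B - 1))) <= 2).
  { rewrite HDB, Rabs_mult, (Rabs_left1 root_correction), Rabs_pos_eq by nra. nra. }
  apply (abs_lt_of_mul_sqrt_le _ D); [exact Hδ | lra |].
  replace (Rabs (shift_error k) * D) with (Rabs (D * shift_error k))
    by (rewrite Rabs_mult, (Rabs_pos_eq D) by lra; ring).
  rewrite HDE.
  pose proof (sqrt_pos D). apply Rabs_le. apply Rabs_le_between in Hcorr. lra.
Qed.

Lemma gamma_model_sign_change :
  1 <= root_guess - δ
  /\ 0 < gamma_model c (B + L) (- lp - L) L (root_guess - δ)
  /\ gamma_model c (B + L) (- lp - L) L (root_guess + δ) < 0.
Proof.
  pose proof root_guess_ge.
  pose proof (shift_error_lt (- δ) ltac:(lra)) as Hlo.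
  pose proof (shift_error_lt δ ltac:(lra)) as Hhi.
  apply Rabs_def2 in Hlo, Hhi.
  replace (root_guess + - δ) with (root_guess - δ) in Hlo by ring.
  rewrite (gamma_model_shift_eq (root_guess - δ) (- δ)), (gamma_model_shift_eq (root_guess + δ) δ)
    by lra.
  assert (0 < (root_guess - δ) * L / 2) by (apply Rmult_lt_0_compat; [apply Rmult_lt_0_compat |]; lra).
  assert (0 < (root_guess + δ) * L / 2) by (apply Rmult_lt_0_compat; [apply Rmult_lt_0_compat |]; lra).
  split; [lra | split; [apply Rmult_lt_0_compat | apply Rmult_pos_neg]]; lra.
Qed.

End ShiftedRoot.

(* The lower bound p >= n^(-1/7) is all that is used of the hypothesis on p;
   δ is the accuracy to which the root is located. *)
Definition regime (n : nat) (p δ : R) : Prop :=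
  0 < p <= 1 / 2 /\ 0 < INR n /\ - (1 / 7) * ln (INR n) <= ln p /\ 700 / δ ^ 2 + 12 <= ln (INR n).

Lemma regime_facts (n : nat) (p δ : R) : 0 < δ <= 1 -> regime n p δ ->
  let B := ln (INR n) + 1 + ln p in
  let L := ln (1 / (1 - p)) in
  0 < L <= 1 /\ 0 <= ln L - ln p <= 1 /\ 0 < B - 1 /\ 0 <= - ln p <= (B - 1) / 6 /\
  1000 / δ ^ 2 <= 2 * (B - 1) /\ 10 <= B + L /\ 0 <= - ln p - L /\ p <= L.
Proof.
  intros Hδ [Hp [Hn [Hlp Hbig]]] B L.
  pose proof (ln_inv_one_sub_bounds p Hp) as HL. fold L in HL.
  assert (Hδ2 : 0 < δ ^ 2) by (apply pow_lt; lra).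
  assert (H700 : 500 / δ ^ 2 <= 700 / δ ^ 2).
  { unfold Rdiv. apply Rmult_le_compat_r; [apply Rlt_le, Rinv_0_lt_compat |]; lra. }
  assert (H1000 : 1000 / δ ^ 2 = 2 * (500 / δ ^ 2)) by (field; lra).
  assert (0 <= 500 / δ ^ 2) by (apply Rdiv_le_0_compat; lra).
  assert (Hlp0 : ln p <= 0) by (rewrite <- ln_1; apply ln_le; lra).
  assert (HLp : 0 <= ln L - ln p <= 1).
  { rewrite <- ln_div by lra. split.
    - rewrite <- ln_1. apply ln_le; [lra |].
      apply (Rmult_le_reg_r p); [lra |]. field_simplify; lra.
    - apply (Rle_trans _ (ln 2)); [| pose proof (ln_le_sub_1 2); lra].
      apply ln_le; [apply Rdiv_lt_0_compat; lra |].
      apply (Rmult_le_reg_r p); [lra |]. field_simplify; lra. }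
  assert (Hq : 0 <= - ln p - L).
  { unfold L. replace (1 / (1 - p)) with (/ (1 - p)) by (field; lra).
    rewrite ln_Rinv by lra.
    assert (ln p <= ln (1 - p)) by (apply ln_le; lra). lra. }
  unfold B. repeat split; lra.
Qed.

Lemma khat_approx_eq_root_guess (n : nat) (p : R) : 0 < p < 1 -> 0 < INR n ->
  khat_approx n p = root_guess (ln (INR n) + 1 + ln p) (ln (1 / (1 - p))) (ln p).
Proof.
  intros Hp Hn. unfold khat_approx, logb, root_guess, root_correction.
  pose proof (exp_pos 1).
  rewrite (ln_mult (exp 1 * INR n)), (ln_mult (exp 1)), ln_exp, (ln_mult (INR n))
    by (try apply Rmult_lt_0_compat; lra).
  replace (ln (INR n) + 1 + ln p - 1) with (ln (INR n) + ln p) by ring.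
  unfold Rdiv. ring.
Qed.

Lemma continuity_pt_opp_gamma (n : nat) (p k : R) : 0 < k -> continuity_pt (fun x => - gamma n p x) k.
Proof.
  intros Hk. apply continuity_pt_filterlim.
  apply (ex_derive_continuous (V := R_NormedModule) (fun x => - gamma n p x)). unfold gamma. auto_derive. lra.
Qed.

Lemma regime_root_near_approx (n : nat) (p δ : R) : 0 < δ <= 1 -> regime n p δ ->
  exists z, Rabs (z - khat_approx n p) <= δ /\ 1 <= z /\ gamma n p z = 0.
Proof.
  intros Hδ Hreg.
  pose proof (regime_facts n p δ Hδ Hreg) as F. simpl in F.
  destruct Hreg as [Hp [Hn _]].
  destruct F as [HL [HLp [HB [Hlp [HBδ _]]]]].
  destruct (gamma_model_sign_change stirling_const _ _ _ δ stirling_const_bounds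
              HL HLp HB Hlp Hδ HBδ) as [H1 [Hlo Hhi]].
  rewrite khat_approx_eq_root_guess by (auto; lra).
  set (k0 := root_guess _ _ _) in *.
  rewrite <- gamma_eq_model in Hlo, Hhi by lra.
  destruct (IVT_interv (fun k => - gamma n p k) (k0 - δ) (k0 + δ)) as [z [Hz Hz0]];
    [intros; apply continuity_pt_opp_gamma; lra | lra | lra | lra |].
  exists z. split; [apply Rabs_le |]; lra.
Qed.

Lemma regime_root_unique (n : nat) (p δ z1 z2 : R) : 0 < δ <= 1 -> regime n p δ ->
  1 <= z1 -> 1 <= z2 -> gamma n p z1 = 0 -> gamma n p z2 = 0 -> z1 = z2.
Proof.
  intros Hδ Hreg H1 H2 E1 E2.
  pose proof (regime_facts n p δ Hδ Hreg) as F. simpl in F.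
  destruct Hreg as [Hp _].
  destruct F as [HL [_ [_ [_ [_ [HA [Hq _]]]]]]].
  rewrite gamma_eq_model in E1, E2 by lra.
  exact (gamma_model_root_unique _ _ _ _ stirling_const_bounds HA Hq (proj1 HL) _ _ H1 H2 E1 E2).
Qed.

(* When gamma n (p n) has no root >= 1 this is an arbitrary junk value;
   in the regime it is the unique such root. *)
Definition khat (p : nat -> R) (n : nat) : R :=
  epsilon (inhabits 0) (fun k => 1 <= k /\ gamma n (p n) k = 0).

Lemma khat_spec (p : nat -> R) (n : nat) (δ : R) : 0 < δ <= 1 -> regime n (p n) δ ->
  Rabs (khat p n - khat_approx n (p n)) <= δ /\ 1 <= khat p n /\ gamma n (p n) (khat p n) = 0.
Proof.
  intros Hδ Hreg.
  destruct (regime_root_near_approx n (p n) δ Hδ Hreg) as [z [Hz [Hz1 Hz0]]].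
  assert (Hk : 1 <= khat p n /\ gamma n (p n) (khat p n) = 0)
    by (apply (epsilon_spec (inhabits 0) (fun k => 1 <= k /\ gamma n (p n) k = 0)); eauto).
  replace (khat p n) with z by (apply (regime_root_unique n (p n) δ); tauto).
  auto.
Qed.

Lemma exponent_ge_neg_inv_7 : - (1 / 7) <= - (exp 1 - 2) / (3 * exp 1 - 2).
Proof.
  pose proof (exp_ineq1_le 1). pose proof exp_le_3.
  assert ((exp 1 - 2) / (3 * exp 1 - 2) <= 1 / 7).
  { apply (Rmult_le_reg_r (3 * exp 1 - 2)); [lra |]. field_simplify; lra. }
  unfold Rdiv in *. lra.
Qed.

Lemma eventually_regime (p : nat -> R)
  (Hlow : exists eps : R, 0 < eps /\ exists N : nat, forall n : nat, (N <= n)%nat ->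
            Rpower (INR n) (- (exp 1 - 2) / (3 * exp 1 - 2) + eps) <= p n)
  (Hp0 : is_lim_seq p 0) (δ M : R) : 0 < δ ->
  eventually (fun n => regime n (p n) δ /\ M <= ln (INR n)).
Proof.
  intros Hδ. destruct Hlow as [eps [Heps [N1 HN1]]].
  apply is_lim_seq_spec in Hp0. destruct (Hp0 (mkposreal (1 / 2) ltac:(lra))) as [N2 HN2].
  pose proof (is_lim_seq_INR) as Hn. apply is_lim_seq_spec in Hn.
  destruct (Hn (exp (Rmax M (700 / δ ^ 2 + 12)))) as [N3 HN3].
  exists (max N1 (max N2 N3)). intros n Hn'.
  specialize (HN1 n ltac:(lia)). specialize (HN2 n ltac:(lia)). specialize (HN3 n ltac:(lia)).
  simpl in HN2. rewrite Rminus_0_r in HN2. apply Rabs_def2 in HN2.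
  pose proof (exp_pos (Rmax M (700 / δ ^ 2 + 12))).
  assert (Hln : Rmax M (700 / δ ^ 2 + 12) <= ln (INR n)).
  { rewrite <- (ln_exp (Rmax M _)). apply ln_le; lra. }
  pose proof (Rmax_l M (700 / δ ^ 2 + 12)). pose proof (Rmax_r M (700 / δ ^ 2 + 12)).
  assert (Hn1 : 1 <= INR n).
  { rewrite <- (exp_ln (INR n)) by lra. pose proof (exp_ineq1_le (ln (INR n))).
    assert (0 <= 700 / δ ^ 2) by (apply Rdiv_le_0_compat; [| apply pow_lt]; lra).
    lra. }
  assert (Hpow : Rpower (INR n) (- (1 / 7)) <= p n).
  { eapply Rle_trans; [| exact HN1].
    apply Rle_Rpower; [exact Hn1 |]. pose proof exponent_ge_neg_inv_7. lra. }
  assert (0 < Rpower (INR n) (- (1 / 7))) by apply exp_pos.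
  repeat split; try lra.
  replace (- (1 / 7) * ln (INR n)) with (ln (Rpower (INR n) (- (1 / 7))))
    by (unfold Rpower; rewrite ln_exp; ring).
  apply ln_le; lra.
Qed.

Lemma khat_approx_bounds (n : nat) (p δ : R) : 0 < δ <= 1 -> regime n p δ ->
  2 * (ln (INR n) + 1 + ln p) + 1 <= khat_approx n p <= 2 * (ln (INR n) + 1) / p + 3.
Proof.
  intros Hδ Hreg.
  pose proof (regime_facts n p δ Hδ Hreg) as F. simpl in F.
  destruct Hreg as [Hp [Hn [Hlp _]]].
  destruct F as [HL [HLp [HB [Hlp6 [HBδ [_ [_ HpL]]]]]]].
  rewrite khat_approx_eq_root_guess by (auto; lra).
  pose proof (root_guess_ge _ _ _ HL HB Hlp6) as Hge.
  pose proof (root_guess_le _ (ln (1 / (1 - p))) _ HB Hlp6) as Hle.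
  split; [exact Hge |].
  eapply Rle_trans; [exact Hle |]. apply Rplus_le_compat_r.
  unfold Rdiv. apply Rmult_le_compat; [lra | | lra |].
  - apply Rlt_le, Rinv_0_lt_compat. lra.
  - apply Rinv_le_contravar; lra.
Qed.

(* With 1/p <= e^(x/7) and x + 1 <= 14 e^(x/14), k is O(e^(3x/14)), far below sqrt(e^x) = e^(x/2). *)
Lemma div_sqrt_exp_le (x p k : R) : 0 <= x -> 0 < p -> / p <= exp (x / 7) ->
  0 <= k <= 2 * (x + 1) / p + 4 -> k / sqrt (exp x) <= 32 / (1 + 2 * x / 7).
Proof.
  intros Hx Hp Hip Hk.
  assert (Hs : sqrt (exp x) = exp (x / 2)).
  { replace (exp x) with (exp (x / 2) * exp (x / 2)) by (rewrite <- exp_plus; f_equal; field).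
    apply sqrt_square, Rlt_le, exp_pos. }
  rewrite Hs.
  assert (E1 : x + 1 <= 14 * exp (x / 14)) by (pose proof (exp_ineq1_le (x / 14)); lra).
  assert (E2 : 1 + 2 * x / 7 <= exp (2 * x / 7)) by apply exp_ineq1_le.
  assert (E3 : 1 <= exp (3 * x / 14)) by (pose proof (exp_ineq1_le (3 * x / 14)); lra).
  assert (Hsplit : exp (x / 14) * exp (x / 7) = exp (3 * x / 14))
    by (rewrite <- exp_plus; f_equal; field).
  assert (Hk2 : k <= 32 * exp (3 * x / 14)).
  { assert (2 * (x + 1) * / p <= 2 * (14 * exp (x / 14)) * exp (x / 7))
      by (apply Rmult_le_compat; try apply Rlt_le, Rinv_0_lt_compat; lra).
    unfold Rdiv in Hk. nra. }
  assert (Hratio : exp (3 * x / 14) = exp (x / 2) * / exp (2 * x / 7))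
    by (rewrite <- exp_Ropp, <- exp_plus; f_equal; field).
  pose proof (exp_pos (x / 2)). pose proof (exp_pos (2 * x / 7)).
  apply (Rmult_le_reg_r (exp (x / 2))); [lra |].
  unfold Rdiv at 1. rewrite Rmult_assoc, Rinv_l, Rmult_1_r by lra.
  eapply Rle_trans; [exact Hk2 |]. rewrite Hratio.
  assert (/ exp (2 * x / 7) <= / (1 + 2 * x / 7)) by (apply Rinv_le_contravar; lra).
  unfold Rdiv. nra.
Qed.

Section RootAsymptotics.

Variable p : nat -> R.
Hypothesis Hlow : exists eps : R, 0 < eps /\ exists N : nat, forall n : nat, (N <= n)%nat ->
  Rpower (INR n) (- (exp 1 - 2) / (3 * exp 1 - 2) + eps) <= p n.
Hypothesis Hp0 : is_lim_seq p 0.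

Lemma khat_eventually_root : exists N, forall n, (N <= n)%nat -> gamma n (p n) (khat p n) = 0.
Proof.
  destruct (eventually_regime p Hlow Hp0 1 0 Rlt_0_1) as [N HN]. exists N. intros n Hn.
  apply (khat_spec p n 1); [lra | apply HN, Hn].
Qed.

Lemma is_lim_seq_khat : is_lim_seq (khat p) p_infty.
Proof.
  apply is_lim_seq_spec. intros M.
  destruct (eventually_regime p Hlow Hp0 1 (Rabs M) Rlt_0_1) as [N HN]. exists N. intros n Hn.
  destruct (HN n Hn) as [Hreg HM].
  destruct (khat_spec p n 1 ltac:(lra) Hreg) as [Hk _].
  pose proof (khat_approx_bounds n (p n) 1 ltac:(lra) Hreg) as [Ha _].
  destruct Hreg as [_ [_ [Hlp _]]].
  apply Rabs_le_between in Hk. pose proof (Rle_abs M). pose proof (Rabs_pos M). lra.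
Qed.

Lemma is_lim_seq_khat_div_sqrt : is_lim_seq (fun n => khat p n / sqrt (INR n)) 0.
Proof.
  apply is_lim_seq_spec. intros eps. pose proof (cond_pos eps) as He.
  destruct (eventually_regime p Hlow Hp0 1 (112 / eps) Rlt_0_1) as [N HN]. exists N.
  intros n Hn. destruct (HN n Hn) as [Hreg HM]. rewrite Rminus_0_r.
  destruct (khat_spec p n 1 ltac:(lra) Hreg) as [Hk [Hk1 _]].
  pose proof (khat_approx_bounds n (p n) 1 ltac:(lra) Hreg) as [_ Ha].
  destruct Hreg as [Hp [Hn0 [Hlp _]]].
  assert (H112 : 112 / eps * eps = 112) by (field; lra).
  assert (Hx : 0 <= ln (INR n)) by (assert (0 < 112 / eps) by (apply Rdiv_lt_0_compat; lra); lra).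
  assert (Hip : / p n <= exp (ln (INR n) / 7)).
  { rewrite <- (exp_ln (p n)), <- exp_Ropp by lra.
    destruct (Req_dec (- ln (p n)) (ln (INR n) / 7)) as [Heq | Hne];
      [rewrite Heq; lra | left; apply exp_increasing; lra]. }
  apply Rabs_le_between in Hk.
  pose proof (div_sqrt_exp_le (ln (INR n)) (p n) (khat p n) Hx ltac:(lra) Hip ltac:(lra)) as Hb.
  rewrite exp_ln in Hb by lra.
  assert (0 < sqrt (INR n)) by (apply sqrt_lt_R0; lra).
  rewrite Rabs_pos_eq by (apply Rdiv_le_0_compat; lra).
  eapply Rle_lt_trans; [exact Hb |].
  apply (Rmult_lt_reg_r (1 + 2 * ln (INR n) / 7)); [lra |].
  unfold Rdiv at 1. rewrite Rmult_assoc, Rinv_l by lra. nra.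
Qed.

Lemma khat_eventually_unique (k : nat -> R) :
  (exists N, forall n, (N <= n)%nat -> gamma n (p n) (k n) = 0) ->
  is_lim_seq k p_infty ->
  exists N, forall n, (N <= n)%nat -> k n = khat p n.
Proof.
  intros [N1 HN1] Hk.
  destruct (eventually_regime p Hlow Hp0 1 0 Rlt_0_1) as [N2 HN2].
  apply is_lim_seq_spec in Hk. destruct (Hk 1) as [N3 HN3].
  exists (max N1 (max N2 N3)). intros n Hn.
  destruct (HN2 n ltac:(lia)) as [Hreg _].
  destruct (khat_spec p n 1 ltac:(lra) Hreg) as [_ [Hk1 Hk0]].
  apply (regime_root_unique n (p n) 1); auto; [lra | left; apply HN3 | apply HN1]; lia.
Qed.

Lemma is_lim_seq_khat_sub_approx : is_lim_seq (fun n => khat p n - khat_approx n (p n)) 0.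
Proof.
  apply is_lim_seq_spec. intros eps. pose proof (cond_pos eps) as He.
  pose (δ := Rmin (eps / 2) 1).
  assert (Hδ : 0 < δ <= 1) by (split; [apply Rmin_glb_lt | apply Rmin_r]; lra).
  assert (δ <= eps / 2) by apply Rmin_l.
  destruct (eventually_regime p Hlow Hp0 δ 0 ltac:(lra)) as [N HN]. exists N. intros n Hn.
  destruct (khat_spec p n δ Hδ (proj1 (HN n Hn))) as [Hk _].
  rewrite Rminus_0_r. lra.
Qed.

Lemma eventually_p_in_unit : eventually (fun n => 0 < p n < 1).
Proof.
  destruct (eventually_regime p Hlow Hp0 1 0 Rlt_0_1) as [N HN]. exists N. intros n Hn.
  destruct (HN n Hn) as [[Hp _] _]. lra.
Qed.

End RootAsymptotics.

Theorem mainTheorem2 (p : nat -> R)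
  (Hlow : exists eps : R, 0 < eps /\ exists N : nat, forall n : nat, (N <= n)%nat ->
            Rpower (INR n) (- (exp 1 - 2) / (3 * exp 1 - 2) + eps) <= p n)
  (Hp0 : is_lim_seq p 0) :
  exists khat : nat -> R,
    (exists N : nat, forall n : nat, (N <= n)%nat -> gamma n (p n) (khat n) = 0)
    /\ is_lim_seq khat p_infty
    /\ is_lim_seq (fun n => khat n / sqrt (INR n)) 0
    /\ (forall k' : nat -> R,
          (exists N : nat, forall n : nat, (N <= n)%nat -> gamma n (p n) (k' n) = 0) ->
          is_lim_seq k' p_infty ->
          is_lim_seq (fun n => k' n / sqrt (INR n)) 0 ->
          exists N : nat, forall n : nat, (N <= n)%nat -> k' n = khat n)
    /\ is_lim_seq (fun n => khat n - khat_approx n (p n)) 0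
    /\ (forall k : nat -> nat,
          is_lim_seq (fun n => INR (k n)) p_infty ->
          is_lim_seq (fun n => INR (k n) / sqrt (INR n)) 0 ->
          is_lim_seq (fun n => EX n (p n) (k n) / exp (gamma n (p n) (INR (k n)))) 1).
Proof.
  exists (khat p).
  split; [exact (khat_eventually_root p Hlow Hp0) |].
  split; [exact (is_lim_seq_khat p Hlow Hp0) |].
  split; [exact (is_lim_seq_khat_div_sqrt p Hlow Hp0) |].
  split; [intros k' Hroot Hinf _; exact (khat_eventually_unique p Hlow Hp0 k' Hroot Hinf) |].
  split; [exact (is_lim_seq_khat_sub_approx p Hlow Hp0) |].
  intros k Hinf Hsqrt.
  exact (is_lim_seq_EX_div_exp_gamma p k (eventually_p_in_unit p Hlow Hp0) Hinf Hsqrt).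
Qed.
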